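(* Let $a,b$ be real numbers with $0<a<1$, $0\le b<1$, and suppose $2^{e_0}a$ and $2^{e_0}b$ are integers for some $e_0$. Put $k_{\mathrm r}=-\frac{1}{1-a}$ and $c=\frac{1}{2-a}$ (the unique fixed point of the continuous generalized Tent map). Then there is $E$ such that for every integer $e\ge \max(E,e_0)$ the following holds, where $T_e$ is the generalized Tent map defined below and $x'=\max\{x\in\{0,\dots,2^e\} : x\ge 2^e a,\ T_e(x)\ge 2^e a\}$: for every integer $x$ with $2^e a\le x\le 2^e c+\frac{k_{\mathrm r}}{k_{\mathrm r}^2-1}$ one has $T_e^2(x)<x$, and for every integer $x$ with $2^e c+\frac{1}{k_{\mathrm r}^2-1}<x\le x'$ one has $T_e^2(x)>x$. (Here $T_e^2=T_e\circ T_e$.)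
   Context: The generalized Tent map in the fixed-point domain of precision $e$ (with floor quantization) is the map $T_e:\{0,1,\dots,2^e\}\to\mathbb{Z}$ given by $$T_e(x)=\begin{cases}\left\lfloor 2^e b+\frac{1-b}{a}\,x\right\rfloor & \text{if } 0\le x<2^e a,\\[2pt] \left\lfloor \frac{2^e-x}{1-a}\right\rfloor & \text{if } 2^e a\le x\le 2^e,\end{cases}$$ where $a,b$ are parameters with $2^e a,2^e b\in\{0,1,\dots,2^e\}$. *)

From Stdlib Require Import Reals ZArith.
Open Scope R_scope.

(* floor on R: Stdlib's Int_part r = up r - 1 is the floor of r. *)
Definition floorR (r : R) : Z := Int_part r.

(* Generalized Tent map in the fixed-point domain of precision e,
   floor quantization; the formula is given for every integer x
   (it is only used on x in {0,...,2^e}). *)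
Definition Tent (a b : R) (e : nat) (x : Z) : Z :=
  if Rlt_dec (IZR x) (2 ^ e * a)
  then floorR (2 ^ e * b + (1 - b) / a * IZR x)
  else floorR ((2 ^ e - IZR x) / (1 - a)).

Definition is_xprime (a b : R) (e : nat) (xp : Z) : Prop :=
  (0 <= IZR xp <= 2 ^ e) /\ 2 ^ e * a <= IZR xp /\
  2 ^ e * a <= IZR (Tent a b e xp) /\
  (forall y : Z, 0 <= IZR y <= 2 ^ e -> 2 ^ e * a <= IZR y ->
     2 ^ e * a <= IZR (Tent a b e y) -> (y <= xp)%Z).

Definition k_r (a : R) : R := - (1 / (1 - a)).
Definition c_fix (a : R) : R := 1 / (2 - a).

From Stdlib Require Import Reals ZArith Lra Lia Psatz.
Open Scope R_scope.

(* On [2^e a, 2^e] the map T_e is the floor of the decreasing affine map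
   x |-> (2^e - x) / (1 - a), of slope k_r and fixed point 2^e c.  Hence
   T_e^2 x is k_r^2 (x - 2^e c) + 2^e c up to a rounding error: the floor in
   the first step costs less than 1, which the second step multiplies by
   |k_r|, and the floor in the second step costs less than 1 more.  The two
   thresholds of the theorem are exactly the points beyond which the
   expansion by k_r^2 away from the fixed point beats these errors.  E is only
   needed so that 2^e (c - a) >= 1, which keeps the first iterate of a point
   left of the fixed point inside the right branch. *)

Definition tentR (a N x : R) : R := (N - x) / (1 - a).

Lemma tentR_antitone (a N x y : R) :
  0 < a < 1 -> x <= y -> tentR a N y <= tentR a N x.
Proof.
  intros Ha Hxy; unfold tentR, Rdiv.
  apply Rmult_le_compat_r; [apply Rlt_le, Rinv_0_lt_compat|]; lra.
Qed.

Lemma tentR_gt_fix (a N x : R) :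
  0 < a < 1 -> x * (a * (2 - a)) < N * a -> N * c_fix a < tentR a N x.
Proof.
  intros Ha Hx; unfold tentR, c_fix.
  assert (Hx' : x < N / (2 - a)).
  { apply Rmult_lt_reg_r with (a * (2 - a)); [nra|].
    replace (N / (2 - a) * (a * (2 - a))) with (N * a) by (field; lra); lra. }
  apply Rmult_lt_reg_r with (1 - a); [lra|].
  replace ((N - x) / (1 - a) * (1 - a)) with (N - x) by (field; lra).
  replace (N * (1 / (2 - a)) * (1 - a)) with (N - N / (2 - a)) by (field; lra).
  lra.
Qed.

Lemma tentR_lt_of_gt_pred (a N x y : R) :
  0 < a < 1 -> x * (a * (2 - a)) <= N * a - (1 - a) ->
  tentR a N x - 1 < y -> tentR a N y < x.
Proof.
  intros Ha Hx Hy; unfold tentR in *.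
  assert (Hw : (N - x) / (1 - a) * (1 - a) = N - x) by (field; lra).
  apply Rmult_lt_reg_r with (1 - a); [lra|].
  replace ((N - y) / (1 - a) * (1 - a)) with (N - y) by (field; lra).
  nra.
Qed.

Lemma tentR_ge_succ (a N x y : R) :
  0 < a < 1 -> N * a + (1 - a) ^ 2 <= x * (a * (2 - a)) ->
  y <= tentR a N x -> x + 1 <= tentR a N y.
Proof.
  intros Ha Hx Hy; unfold tentR in *.
  assert (Hw : (N - x) / (1 - a) * (1 - a) = N - x) by (field; lra).
  apply Rmult_le_reg_r with (1 - a); [lra|].
  replace ((N - y) / (1 - a) * (1 - a)) with (N - y) by (field; lra).
  nra.
Qed.

(* k_r^2 - 1 = a (2 - a) / (1 - a)^2 and a (2 - a) c = a. *)
Lemma le_lower_threshold (a N x : R) :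
  0 < a < 1 -> x <= N * c_fix a + k_r a / (k_r a ^ 2 - 1) ->
  x * (a * (2 - a)) <= N * a - (1 - a).
Proof.
  intros Ha Hx.
  replace (N * a - (1 - a))
    with ((N * c_fix a + k_r a / (k_r a ^ 2 - 1)) * (a * (2 - a))).
  - apply Rmult_le_compat_r; nra.
  - unfold c_fix, k_r; field; repeat split; nra.
Qed.

Lemma gt_upper_threshold (a N x : R) :
  0 < a < 1 -> N * c_fix a + 1 / (k_r a ^ 2 - 1) < x ->
  N * a + (1 - a) ^ 2 < x * (a * (2 - a)).
Proof.
  intros Ha Hx.
  replace (N * a + (1 - a) ^ 2)
    with ((N * c_fix a + 1 / (k_r a ^ 2 - 1)) * (a * (2 - a))).
  - apply Rmult_lt_compat_r; nra.
  - unfold c_fix, k_r; field; repeat split; nra.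
Qed.

Lemma floorR_le (r : R) : IZR (floorR r) <= r.
Proof. unfold floorR; destruct (base_Int_part r); lra. Qed.

Lemma floorR_gt_pred (r : R) : r - 1 < IZR (floorR r).
Proof. unfold floorR; destruct (base_Int_part r); lra. Qed.

Lemma floorR_le_mono (r s : R) : r <= s -> (floorR r <= floorR s)%Z.
Proof.
  intros Hrs.
  assert (H : IZR (floorR r) < IZR (floorR s + 1)).
  { rewrite plus_IZR; pose proof (floorR_le r); pose proof (floorR_gt_pred s); lra. }
  apply lt_IZR in H; lia.
Qed.

Lemma Tent_right (a b : R) (e : nat) (x : Z) :
  2 ^ e * a <= IZR x -> Tent a b e x = floorR (tentR a (2 ^ e) (IZR x)).
Proof.
  intros Hx; unfold Tent.
  destruct (Rlt_dec (IZR x) (2 ^ e * a)); [lra | reflexivity].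
Qed.

Lemma Tent_right_antitone (a b : R) (e : nat) (x y : Z) :
  0 < a < 1 -> 2 ^ e * a <= IZR x -> (x <= y)%Z ->
  (Tent a b e y <= Tent a b e x)%Z.
Proof.
  intros Ha Hx Hxy.
  assert (Hxy' : IZR x <= IZR y) by (apply IZR_le; exact Hxy).
  rewrite !Tent_right by lra.
  apply floorR_le_mono, tentR_antitone; assumption.
Qed.

Lemma Tent2_lt_left_of_fix (a b : R) (e : nat) (x : Z) :
  0 < a < 1 -> 1 <= 2 ^ e * (c_fix a - a) -> 2 ^ e * a <= IZR x ->
  IZR x * (a * (2 - a)) <= 2 ^ e * a - (1 - a) ->
  (Tent a b e (Tent a b e x) < x)%Z.
Proof.
  intros Ha HE Hx Hthr.
  rewrite (Tent_right a b e x Hx).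
  set (y := floorR (tentR a (2 ^ e) (IZR x))).
  assert (Hy : tentR a (2 ^ e) (IZR x) - 1 < IZR y) by apply floorR_gt_pred.
  assert (Hfix : 2 ^ e * c_fix a < tentR a (2 ^ e) (IZR x))
    by (apply tentR_gt_fix; lra).
  rewrite (Tent_right a b e y) by lra.
  apply lt_IZR.
  eapply Rle_lt_trans; [apply floorR_le|].
  apply tentR_lt_of_gt_pred; assumption.
Qed.

Lemma Tent2_gt_right_of_fix (a b : R) (e : nat) (x xp : Z) :
  0 < a < 1 -> 2 ^ e * a <= IZR (Tent a b e xp) -> (x <= xp)%Z ->
  2 ^ e * a + (1 - a) ^ 2 <= IZR x * (a * (2 - a)) ->
  (Tent a b e (Tent a b e x) > x)%Z.
Proof.
  intros Ha Hxp Hxxp Hthr.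
  assert (HN : 0 < 2 ^ e) by (apply pow_lt; lra).
  assert (Hx : 2 ^ e * a <= IZR x).
  { assert (Hp : 0 < a * (2 - a) <= 1) by nra.
    assert (0 < IZR x) by nra.
    nra. }
  assert (Hy : 2 ^ e * a <= IZR (Tent a b e x)).
  { eapply Rle_trans; [exact Hxp|].
    apply IZR_le, Tent_right_antitone; assumption. }
  rewrite (Tent_right a b e (Tent a b e x) Hy).
  rewrite (Tent_right a b e x Hx) in *.
  apply Z.lt_gt, lt_IZR.
  eapply Rle_lt_trans; [|apply floorR_gt_pred].
  pose proof (tentR_ge_succ a (2 ^ e) (IZR x)
                (IZR (floorR (tentR a (2 ^ e) (IZR x)))) Ha Hthr (floorR_le _)).
  lra.
Qed.

Lemma c_fix_gt (a : R) : 0 < a < 1 -> a < c_fix a.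
Proof.
  intros Ha; unfold c_fix.
  apply Rmult_lt_reg_r with (2 - a); [lra|].
  replace (1 / (2 - a) * (2 - a)) with 1 by (field; lra); nra.
Qed.

Lemma pow2_mul_ge_1 (d : R) :
  0 < d -> exists E : nat, forall e : nat, (E <= e)%nat -> 1 <= 2 ^ e * d.
Proof.
  intros Hd.
  destruct (archimed (/ d)) as [Hup _].
  exists (Z.to_nat (up (/ d))); intros e He.
  assert (Hup' : / d <= INR (Z.to_nat (up (/ d)))).
  { destruct (Z_le_gt_dec 0 (up (/ d))).
    - rewrite INR_IZR_INZ, Z2Nat.id by lia; lra.
    - assert (IZR (up (/ d)) <= 0) by (apply IZR_le; lia).
      pose proof (pos_INR (Z.to_nat (up (/ d)))); lra. }
  assert (Hpow : INR e < 2 ^ e).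
  { clear He; induction e as [|e IH]; [simpl; lra|].
    rewrite S_INR; simpl.
    assert (1 <= 2 ^ e) by (apply pow_R1_Rle; lra); lra. }
  apply le_INR in He.
  apply Rmult_le_reg_r with (/ d); [apply Rinv_0_lt_compat; exact Hd|].
  rewrite Rmult_assoc, Rinv_r, Rmult_1_r, Rmult_1_l by lra.
  lra.
Qed.

Theorem mainTheorem2 (a b : R) (e0 : nat) :
  0 < a < 1 -> 0 <= b < 1 ->
  (exists z : Z, 2 ^ e0 * a = IZR z) ->
  (exists z : Z, 2 ^ e0 * b = IZR z) ->
  exists E : nat, forall e : nat, (Nat.max E e0 <= e)%nat ->
    forall xp : Z, is_xprime a b e xp ->
      (forall x : Z,
         2 ^ e * a <= IZR x <= 2 ^ e * c_fix a + k_r a / (k_r a ^ 2 - 1) ->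
         (Tent a b e (Tent a b e x) < x)%Z) /\
      (forall x : Z,
         2 ^ e * c_fix a + 1 / (k_r a ^ 2 - 1) < IZR x -> (x <= xp)%Z ->
         (Tent a b e (Tent a b e x) > x)%Z).
Proof.
  intros Ha _ _ _.
  assert (Hd : 0 < c_fix a - a) by (pose proof (c_fix_gt a Ha); lra).
  destruct (pow2_mul_ge_1 _ Hd) as [E HE].
  exists E; intros e He xp [_ [_ [Hxp _]]]; split.
  - intros x [Hx Hthr].
    apply Tent2_lt_left_of_fix; [exact Ha | | exact Hx |].
    + apply HE; lia.
    + apply le_lower_threshold; assumption.
  - intros x Hthr Hxxp.
    apply (Tent2_gt_right_of_fix a b e x xp Ha Hxp Hxxp).
    apply Rlt_le, gt_upper_threshold; assumption.
Qed.
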